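(* Let $d\ge2$ and let $p_1,\dots,p_{d+1}$ be the vertices of a regular $d$-simplex inscribed in the unit sphere centered at the origin of $\mathbb{R}^d$. For each $i$, let $q_i$ be the point on the ray from the origin through the circumcenter of the facet $[p_1,\dots,p_{i-1},p_{i+1},\dots,p_{d+1}]$ at distance $\rho$ from the origin, where $\rho>20d$. For each $i\in\{1,\dots,d+1\}$, let $a$ and $\rho'$ be the center and radius of the circumsphere of the $d$-simplex $[p_1,\dots,p_{i-1},q_i,p_{i+1},\dots,p_{d+1}]$. Then $\|a\|-\rho'>\frac{1}{10d}$. *)

From HB Require Import structures.
From mathcomp Require Import all_boot all_order all_algebra.
From mathcomp Require Import reals.
Set Implicit Arguments. Unset Strict Implicit. Unset Printing Implicit Defensive.
Import Order.TTheory GRing.Theory Num.Theory.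
Local Open Scope ring_scope.

Definition enorm (R : realType) (d : nat) (v : 'rV[R]_d) : R :=
  Num.sqrt (\sum_(j < d) v 0 j ^+ 2).

Definition regular_simplex_in_unit_sphere (R : realType) (d : nat)
  (p : 'I_d.+1 -> 'rV[R]_d) : Prop :=
  (forall i, enorm (p i) = 1) /\
  exists s : R, 0 < s /\ forall i j, i != j -> enorm (p i - p j) = s.

Definition in_facet_affine_hull (R : realType) (d : nat)
  (p : 'I_d.+1 -> 'rV[R]_d) (i : 'I_d.+1) (c : 'rV[R]_d) : Prop :=
  exists w : 'I_d.+1 -> R,
    w i = 0 /\ \sum_(j < d.+1) w j = 1 /\ c = \sum_(j < d.+1) w j *: p j.

Definition facet_circumcenter (R : realType) (d : nat)
  (p : 'I_d.+1 -> 'rV[R]_d) (i : 'I_d.+1) (c : 'rV[R]_d) : Prop :=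
  in_facet_affine_hull p i c /\
  exists r : R, forall j, j != i -> enorm (c - p j) = r.

Definition replace_vertex (R : realType) (d : nat)
  (p : 'I_d.+1 -> 'rV[R]_d) (i : 'I_d.+1) (q : 'rV[R]_d) : 'I_d.+1 -> 'rV[R]_d :=
  fun j => if j == i then q else p j.

Definition circumsphere (R : realType) (d : nat)
  (v : 'I_d.+1 -> 'rV[R]_d) (a : 'rV[R]_d) (r : R) : Prop :=
  forall j, enorm (a - v j) = r.

From HB Require Import structures.
From mathcomp Require Import all_boot all_order all_algebra.
From mathcomp Require Import reals.
From mathcomp Require Import ring lra.
Import Order.TTheory GRing.Theory Num.Theory.
Local Open Scope ring_scope.

(* The Gram matrix of the vertices p_j is (1 - g) I + g J.  As d + 1 vectors of
   R^d are linearly dependent, every linear relation among the vertices then has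
   constant coefficients: the vertices sum to 0, g = -1/d, and they span R^d.
   Hence a point equidistant from the vertices of the facet opposite p_i lies on
   the line R p_i: the facet circumcenter is -p_i/d, so q = -rho p_i, and the new
   circumcenter is a = al p_i.  The equation |al p_i - p_j| = |al + rho| fixes al,
   and ||a|| - rho' = (rho - d) / (d rho - 1), which exceeds 1/(10 d) once
   rho > 20 d. *)

Section DotProduct.
Set Implicit Arguments. Unset Strict Implicit.
Variables (R : realType) (d : nat).
Implicit Types (u v w : 'rV[R]_d).

Definition dot u v : R := \sum_k u 0 k * v 0 k.

Lemma dotC u v : dot u v = dot v u.
Proof. by apply: eq_bigr => k _; rewrite mulrC. Qed.

Lemma dotDl u w v : dot (u + w) v = dot u v + dot w v.
Proof. by rewrite /dot -big_split; apply: eq_bigr => k _; rewrite mxE mulrDl. Qed.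

Lemma dotZl a u v : dot (a *: u) v = a * dot u v.
Proof. by rewrite /dot mulr_sumr; apply: eq_bigr => k _; rewrite mxE mulrA. Qed.

Lemma dotBl u w v : dot (u - w) v = dot u v - dot w v.
Proof. by rewrite dotDl -scaleN1r dotZl mulN1r. Qed.

Lemma dotZr a u v : dot v (a *: u) = a * dot v u.
Proof. by rewrite dotC dotZl dotC. Qed.

Lemma dotBr u w v : dot v (u - w) = dot v u - dot v w.
Proof. by rewrite dotC dotBl !(dotC v). Qed.

Lemma dot_suml n (f : 'I_n -> 'rV[R]_d) v :
  dot (\sum_(j < n) f j) v = \sum_(j < n) dot (f j) v.
Proof.
rewrite /dot (exchange_big _ _ _ predT predT) /=.
by apply: eq_bigr => k _; rewrite summxE mulr_suml.
Qed.

Lemma dot0l v : dot 0 v = 0.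
Proof. by rewrite /dot big1 // => k _; rewrite mxE mul0r. Qed.

Lemma dot_eq0 v : dot v v = 0 -> v = 0.
Proof.
have sq_ge0 k : true -> 0 <= v 0 k * v 0 k by rewrite -expr2 sqr_ge0.
move=> /psumr_eq0P-/(_ sq_ge0) v0; apply/rowP => k; rewrite mxE.
by have /eqP := v0 k isT; rewrite mulf_eq0 orbb => /eqP.
Qed.

Lemma enormE v : enorm v = Num.sqrt (dot v v).
Proof. by congr Num.sqrt; apply: eq_bigr => k _; rewrite expr2. Qed.

Lemma enorm_sqr v : enorm v ^+ 2 = dot v v.
Proof. by rewrite enormE sqr_sqrtr // sumr_ge0 // => k _; rewrite -expr2 sqr_ge0. Qed.

End DotProduct.

Lemma exists_nontrivial_rel (F : fieldType) (m n : nat) (u : 'I_n -> 'rV[F]_m) :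
  (m < n)%N -> exists2 l : 'I_n -> F, (exists j, l j != 0) & \sum_j l j *: u j = 0.
Proof.
move=> lt_mn; pose M := \matrix_(j < n, k < m) u j 0 k.
have : kermx M != 0.
  rewrite -mxrank_eq0 mxrank_ker subn_eq0 -ltnNge.
  exact: leq_ltn_trans (rank_leq_col M) lt_mn.
case/rowV0Pn => x /sub_kermxP xM x0; exists (fun j => x 0 j).
  apply/existsP; apply: contraNT x0 => /existsPn x_eq0.
  by apply/eqP/rowP => j; rewrite mxE; apply/eqP/negPn.
apply/rowP => k; have := congr1 (fun y : 'M_(1, m) => y 0 k) xM.
rewrite summxE !mxE => E; apply: etrans E.
by apply: eq_bigr => j _; rewrite !mxE.
Qed.

Lemma sum_mulr_delta (R : comPzRingType) n (f : 'I_n -> R) k g x :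
  \sum_(j < n) f j * (g + (j == k)%:R * x) = g * \sum_j f j + f k * x.
Proof.
under eq_bigr do rewrite mulrDr mulrC mulrCA.
rewrite big_split /= -mulr_sumr; congr (_ + _).
rewrite (bigD1 k) //= eqxx mul1r big1 ?addr0 // => j /negbTE->.
by rewrite mul0r.
Qed.

Section Equiangular.
Set Implicit Arguments. Unset Strict Implicit.
Variables (R : realType) (d n : nat) (p : 'I_n -> 'rV[R]_d) (g : R).
Hypothesis g_neq1 : g != 1.
Hypothesis p_gram : forall j k, dot (p j) (p k) = g + (j == k)%:R * (1 - g).

Lemma equiangular_rel_const (l : 'I_n -> R) :
  \sum_j l j *: p j = 0 -> forall j k, l j = l k.
Proof.
move=> l_rel.
have l_gram k : l k * (1 - g) = - (g * \sum_j l j).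
  have : \sum_j l j * (g + (j == k)%:R * (1 - g)) = 0.
    transitivity (dot (\sum_j l j *: p j) (p k)); last by rewrite l_rel dot0l.
    by rewrite dot_suml; apply: eq_bigr => j _; rewrite dotZl p_gram.
  by rewrite sum_mulr_delta => /eqP; rewrite addrC addr_eq0 => /eqP.
move=> j k; apply: (mulIf (_ : 1 - g != 0)); first by rewrite subr_eq0 eq_sym.
by rewrite !l_gram.
Qed.

Lemma equiangular_sum_eq0 : (d < n)%N -> \sum_j p j = 0.
Proof.
move=> lt_dn; have [l [j0 lj0] l_rel] := exists_nontrivial_rel p lt_dn.
have l_const := equiangular_rel_const l_rel.
have : l j0 *: \sum_j p j = 0.
  rewrite scaler_sumr; apply: etrans l_rel.
  by apply: eq_bigr => j _; rewrite (l_const j j0).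
by move/eqP; rewrite scaler_eq0 (negbTE lj0) => /eqP.
Qed.

End Equiangular.

Section RegularSimplex.
Set Implicit Arguments. Unset Strict Implicit.
Variables (R : realType) (d : nat) (p : 'I_d.+1 -> 'rV[R]_d).
Hypothesis p_regular : regular_simplex_in_unit_sphere p.

Lemma simplex_dim_gt0 : (0 < d)%N.
Proof.
case: d p p_regular => // q [/(_ ord0)]; rewrite /enorm big_ord0 sqrtr0 => /eqP.
by rewrite eq_sym oner_eq0.
Qed.

Lemma simplex_dim_neq0 : d%:R != 0 :> R.
Proof. by rewrite pnatr_eq0 -lt0n simplex_dim_gt0. Qed.

Lemma simplex_gram : exists2 g : R, g != 1 &
  forall j k, dot (p j) (p k) = g + (j == k)%:R * (1 - g).
Proof.
have [p_unit [s [s_gt0 p_dist]]] := p_regular.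
have p_sqr j : dot (p j) (p j) = 1 by rewrite -enorm_sqr p_unit expr1n.
exists (1 - s ^+ 2 / 2).
  by apply/eqP => h; have := exprn_gt0 2 s_gt0; lra.
move=> j k; case: eqVneq => [->|jk]; first by rewrite p_sqr mul1r addrC subrK.
have := congr1 (fun x => x ^+ 2) (p_dist _ _ jk).
rewrite /= enorm_sqr dotBl !dotBr !p_sqr (dotC (p k)) => <-; lra.
Qed.

Lemma simplex_sum_eq0 : \sum_j p j = 0.
Proof. by have [g g_neq1 gram] := simplex_gram; exact: equiangular_sum_eq0 gram _. Qed.

Lemma simplex_dot j k : dot (p j) (p k) = if j == k then 1 else - d%:R^-1.
Proof.
have [g g_neq1 gram] := simplex_gram.
have cos : 1 + d%:R * g = 0.
  have : \sum_(j < d.+1) 1 * (g + (j == k)%:R * (1 - g)) = 0.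
    transitivity (dot (\sum_j p j) (p k)); last by rewrite simplex_sum_eq0 dot0l.
    by rewrite dot_suml; apply: eq_bigr => m _; rewrite gram mul1r.
  by rewrite sum_mulr_delta sumr_const card_ord mulrSr => E; apply: etrans E; ring.
rewrite gram; case: eqVneq => _; first by rewrite mul1r addrC subrK.
rewrite mul0r addr0; apply: (mulfI simplex_dim_neq0).
by rewrite mulrN divff ?simplex_dim_neq0 //; lra.
Qed.

Lemma simplex_dot_sum v : \sum_j dot v (p j) = 0.
Proof. by under eq_bigr do rewrite dotC; rewrite -dot_suml simplex_sum_eq0 dot0l. Qed.

Lemma simplex_orthogonal_eq0 v : (forall j, dot v (p j) = 0) -> v = 0.
Proof.
move=> v_orth; apply: dot_eq0; apply/eqP; apply: contraT => v_neq0.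
have [g g_neq1 gram] := simplex_gram.
pose u := replace_vertex p ord0 v.
have [l [j lj_neq0] l_rel] := exists_nontrivial_rel u (ltnSn d).
have l0 : l ord0 = 0.
  have := congr1 (fun y => dot y v) l_rel; rewrite /= dot_suml dot0l (bigD1 ord0) //=.
  rewrite big1 => [|k /negbTE k0]; last first.
    by rewrite dotZl /u /replace_vertex k0 dotC v_orth mulr0.
  rewrite addr0 dotZl /u /replace_vertex eqxx => /eqP.
  by rewrite mulf_eq0 (negbTE v_neq0) orbF => /eqP.
have rel_p : \sum_k l k *: p k = 0.
  apply: etrans l_rel; apply: eq_bigr => k _; rewrite /u /replace_vertex.
  by case: eqP => [->|//]; rewrite l0 !scale0r.
by move: lj_neq0; rewrite (equiangular_rel_const g_neq1 gram rel_p j ord0) l0 eqxx.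
Qed.

Lemma equidistant_facet_on_axis i a r :
  (forall j, j != i -> enorm (a - p j) = r) -> a = dot a (p i) *: p i.
Proof.
move=> a_eqd; set mu := (dot a a + 1 - r ^+ 2) / 2.
have a_pj j : j != i -> dot a (p j) = mu.
  move=> ji; rewrite /mu -(a_eqd j ji) enorm_sqr dotBl !dotBr (dotC (p j)).
  rewrite !simplex_dot eqxx; lra.
have a_pi : dot a (p i) = - (mu *+ d).
  have := simplex_dot_sum a; rewrite (bigD1 i) //= => /eqP; rewrite addr_eq0 => /eqP ->.
  rewrite (eq_bigr (fun=> mu)) => [|j ji]; last exact: a_pj.
  by rewrite sumr_const cardC1 card_ord.
apply/eqP; rewrite -subr_eq0; apply/eqP/simplex_orthogonal_eq0 => j.
rewrite dotBl dotZl simplex_dot; case: eqVneq => [<-|ij]; first by rewrite mulr1 subrr.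
by rewrite a_pj 1?eq_sym // a_pi -mulr_natl; field; exact: simplex_dim_neq0.
Qed.

Lemma facet_circumcenterE i c : facet_circumcenter p i c -> c = - d%:R^-1 *: p i.
Proof.
move=> [[w [wi [w1 c_def]]] [r c_eqd]].
rewrite {1}(equidistant_facet_on_axis c_eqd) c_def dot_suml; congr (_ *: _).
rewrite (eq_bigr (fun j => w j * - d%:R^-1)) => [|j _].
  by rewrite -mulr_suml w1 mul1r.
by rewrite dotZl simplex_dot; case: eqP => [->|//]; rewrite wi !mul0r.
Qed.

Lemma enorm_scale_vertex x i : enorm (x *: p i) = `|x|.
Proof. by rewrite enormE dotZl dotZr simplex_dot eqxx mulr1 -expr2 sqrtr_sqr. Qed.

Lemma enorm_sqr_axis_sub_vertex x i j : j != i ->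
  enorm (x *: p i - p j) ^+ 2 = x ^+ 2 + 2 * x / d%:R + 1.
Proof.
move=> ji; rewrite enorm_sqr dotBl !dotBr !dotZl !dotZr !simplex_dot !eqxx (negbTE ji).
by rewrite eq_sym (negbTE ji); field; exact: simplex_dim_neq0.
Qed.

End RegularSimplex.

Lemma circumsphere_gap (R : realFieldType) (D rho al : R) :
  1 <= D -> 20 * D < rho -> al ^+ 2 + 2 * al / D + 1 = (al + rho) ^+ 2 ->
  (10 * D)^-1 < `|al| - `|al + rho|.
Proof.
move=> D_ge1 lt_rho sph.
have D_gt0 : 0 < D by lra.
have rho_gt1 : 1 < rho by lra.
have K_gt0 : 0 < D * rho - 1 by nra.
have K2_gt0 : 0 < 2 * (D * rho - 1) by lra.
have al_eq : al * (2 * (D * rho - 1)) = D * (1 - rho ^+ 2).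
  apply/eqP; rewrite -subr_eq0; apply/eqP.
  transitivity (- D * (al ^+ 2 + 2 * al / D + 1 - (al + rho) ^+ 2)).
    by field; rewrite gt_eqF.
  by rewrite sph subrr mulr0.
have al_lt0 : al < 0.
  by rewrite -(pmulr_llt0 _ K2_gt0) al_eq; nra.
have al_rho_gt0 : 0 < al + rho.
  by rewrite -(pmulr_lgt0 _ K2_gt0) mulrDl al_eq; nra.
rewrite ltr0_norm // gtr0_norm //.
have gap : (- al - (al + rho)) * (D * rho - 1) = rho - D.
  transitivity (- (al * (2 * (D * rho - 1))) - rho * (D * rho - 1)); first ring.
  by rewrite al_eq; ring.
rewrite -[_^-1]mulr1 ltr_pdivrMl ?mulr_gt0 // -subr_gt0 -(pmulr_lgt0 _ K_gt0).
have -> : (10 * D * (- al - (al + rho)) - 1) * (D * rho - 1) =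
          10 * D * (rho - D) - (D * rho - 1) by rewrite -gap; ring.
nra.
Qed.

Theorem lemma3p18 (R : realType) (d : nat) (p : 'I_d.+1 -> 'rV[R]_d) (rho : R)
  (i : 'I_d.+1) (c q a : 'rV[R]_d) (rho' : R) :
  (2 <= d)%N ->
  regular_simplex_in_unit_sphere p ->
  20 * d%:R < rho ->
  facet_circumcenter p i c ->
  (exists t : R, 0 < t /\ q = t *: c) ->
  enorm q = rho ->
  circumsphere (replace_vertex p i q) a rho' ->
  (10 * d%:R)^-1 < enorm a - rho'.
Proof.
move=> d_ge2 p_reg lt_rho c_facet [t [t_gt0 ->]] norm_q a_circ.
have q_axis : t *: c = - rho *: p i.
  have td_gt0 : 0 < t / d%:R by rewrite divr_gt0 // ltr0n (simplex_dim_gt0 p_reg).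
  move: norm_q; rewrite (facet_circumcenterE p_reg c_facet) scalerA enorm_scale_vertex //.
  by rewrite mulrN normrN gtr0_norm // => <-.
have a_facet j : j != i -> enorm (a - p j) = rho'.
  by move=> ji; have := a_circ j; rewrite /replace_vertex (negbTE ji).
have a_axis := equidistant_facet_on_axis p_reg a_facet.
set al := dot a (p i) in a_axis.
have rho'_eq : `|al + rho| = rho'.
  have := a_circ i; rewrite /replace_vertex eqxx q_axis a_axis -scalerBl opprK.
  by rewrite enorm_scale_vertex.
pose j := lift i (Ordinal (simplex_dim_gt0 p_reg)).
have ji : j != i by rewrite eq_sym neq_lift.
rewrite a_axis enorm_scale_vertex // -rho'_eq; apply: circumsphere_gap => //.
  by rewrite ler1n ltnW.
rewrite -[(al + rho) ^+ 2]real_normK ?num_real // rho'_eq -(a_facet j ji) a_axis.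
by rewrite enorm_sqr_axis_sub_vertex.
Qed.
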